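(* Let $t$, $l$, $n$ be positive integers with $t \geq 2l$, and put $t' = [t/l]$. Then for every integer $p > \frac{t'n-1}{t'-1}$ we have $R_{t-l,t}(K_{1,n}) \leq p$.
   Context: $[a]$ denotes the integer part (floor) of a real number $a$. $K_{1,n}$ is the star with $n$ edges. For a graph $G$ and integers $1 \leq s < t$, $R_{s,t}(G)$ is the smallest positive integer $N$ such that every coloring of the edges of the complete graph $K_N$ with $t$ colors contains a (not necessarily induced) subgraph isomorphic to $G$ whose edges use at most $s$ distinct colors. *)

From mathcomp Require Import all_boot all_order all_algebra.
Set Implicit Arguments. Unset Strict Implicit. Unset Printing Implicit Defensive.

(* A t-edge-colouring of K_N: vertices 'I_N, colour of edge {i,j} is c i j
   (required symmetric; the diagonal value is irrelevant). *)
Definition edge_coloring (N t : nat) (c : 'I_N -> 'I_N -> 'I_t) : Prop :=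
  forall i j, c i j = c j i.

(* A (not necessarily induced) copy of G in K_N is an injective map
   f : V -> 'I_N; its colour set is the set of colours of the images of
   the edges of G. *)
Definition copy_colors (V : finType) (e : rel V) (N t : nat)
  (c : 'I_N -> 'I_N -> 'I_t) (f : V -> 'I_N) : {set 'I_t} :=
  [set c (f x.1) (f x.2) | x in [set x : V * V | e x.1 x.2]].

Definition ramsey_prop (s t : nat) (V : finType) (e : rel V) (N : nat) : Prop :=
  forall c : 'I_N -> 'I_N -> 'I_t, edge_coloring c ->
    exists f : V -> 'I_N, injective f /\ #|copy_colors e c f| <= s.

Definition is_Rst (s t : nat) (V : finType) (e : rel V) (N : nat) : Prop :=
  0 < N /\ ramsey_prop s t e N /\
  (forall M, 0 < M -> ramsey_prop s t e M -> N <= M).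

Definition star_rel (n : nat) : rel 'I_n.+1 :=
  fun x y => (x == ord0) != (y == ord0).

(* Fix a vertex v of K_p and split the t colours into T = [t/l] classes of
   consecutive colours, each of size at least l.  By pigeonhole, since
   p (T - 1) >= T n, some class k is used by at most p - 1 - n of the p - 1
   edges at v, so at least n edges at v avoid class k.  These n edges form a
   K_{1,n} whose colours miss all of class k, hence at most t - l colours. *)

From mathcomp Require Import all_boot all_order all_algebra.
From mathcomp Require Import zify.
From Stdlib Require Import Classical Wf_nat.
Import GRing.Theory Num.Theory.

Set Implicit Arguments.
Unset Strict Implicit.
Unset Printing Implicit Defensive.

Lemma Rst_exists_le (s t : nat) (V : finType) (e : rel V) (p : nat) :
  0 < p -> ramsey_prop s t e p -> exists N, is_Rst s t e N /\ N <= p.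
Proof.
move=> p_gt0 Rp; pose P M := 0 < M /\ ramsey_prop s t e M.
have [|N [[[N_gt0 RN] N_min] _]] :=
  @dec_inh_nat_subset_has_unique_least_element P (fun M => classic (P M)).
  by exists p.
have Np : N <= p by apply/leP; apply: N_min.
by exists N; split=> //; split=> //; split=> // M M_gt0 RM; apply/leP; apply: N_min.
Qed.

Lemma pigeonhole_fiber_compl (D K : finType) (A : {set D}) (h : D -> K) n :
  #|A| + #|K| * n < #|K| * #|A|.+1 ->
  exists k, n <= #|[set x in A | h x != k]|.
Proof.
move=> H; apply/existsP; apply: contraTT H => /existsPn small; rewrite -leqNgt.
have fiber_sum : \sum_(k : K) #|[set x in A | h x == k]| = #|A|.
  rewrite -sum1_card (partition_big h xpredT) //=.
  by apply: eq_bigr => k _; rewrite -sum1_card; apply: eq_bigl => x; rewrite inE.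
have fiber_large k : #|A| < #|[set x in A | h x == k]| + n.
  rewrite -(cardsID [set x | h x == k] A) -setIdE ltn_add2l ltnNge.
  apply: contra (small k) => /leq_trans; apply; apply: subset_leq_card.
  by apply/subsetP => x; rewrite !inE andbC.
have : \sum_(k : K) #|A|.+1 <= \sum_(k : K) (#|[set x in A | h x == k]| + n).
  by apply: leq_sum => k _; apply: fiber_large.
rewrite big_split /= fiber_sum !sum_nat_const.
by rewrite (eq_card (_ : [pred _ : K | true] =i K)).
Qed.

Lemma star_copy_colors_sub (N t n : nat) (c : 'I_N -> 'I_N -> 'I_t)
    (v : 'I_N) (C : {set 'I_t}) :
  edge_coloring c -> n <= #|[set u | (u != v) && (c v u \in C)]| ->
  exists f : 'I_n.+1 -> 'I_N,
    injective f /\ copy_colors (@star_rel n) c f \subset C.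
Proof.
move=> csym; set L := [set u | _]; rewrite cardE => size_leaves.
pose leaf (i : 'I_n) := nth v (enum L) i.
have leafL i : leaf i \in L by rewrite -mem_enum mem_nth // (leq_trans _ size_leaves).
have leaf_inj : injective leaf.
  move=> i j /eqP; rewrite nth_uniq ?enum_uniq ?(leq_trans _ size_leaves) //.
  by move/eqP/val_inj.
have leaf_neq i : leaf i != v by move: (leafL i); rewrite inE => /andP[].
have leaf_col i : c v (leaf i) \in C by move: (leafL i); rewrite inE => /andP[].
pose f (x : 'I_n.+1) := if unlift ord0 x is Some i then leaf i else v.
exists f; split.
  rewrite /f => x y; case: unliftP => [i ->|->]; case: unliftP => [j ->|->] //.
  - by move/leaf_inj ->.
  - by move=> E; move: (leaf_neq i); rewrite E eqxx.
  - by move=> E; move: (leaf_neq j); rewrite -E eqxx.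
apply/subsetP => col /imsetP[[x y]]; rewrite inE /star_rel /= => xy ->.
rewrite /f; case: unliftP xy => [i ->|->]; case: unliftP => [j ->|->] //=.
by rewrite csym leaf_col.
Qed.

(* Colours are grouped in blocks of l consecutive colours; the last block,
   of index T, also absorbs the remaining t - (T+1) l colours. *)
Definition colour_block (l T : nat) {t : nat} (col : 'I_t) : 'I_T.+1 :=
  inord (minn (col %/ l) T).

Lemma colour_block_card (t l T : nat) (k : 'I_T.+1) :
  0 < l -> T.+1 * l <= t -> l <= #|[set col : 'I_t | colour_block l T col == k]|.
Proof.
move=> l_gt0 Tl.
have block_lt (i : 'I_l) : k * l + i < t.
  by have := ltn_ord i; have := ltn_ord k; nia.
pose member (i : 'I_l) : 'I_t := Ordinal (block_lt i).
have member_inj : injective member by move=> i j /(congr1 val) /= /addnI /val_inj.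
rewrite -{1}(card_ord l) -(card_imset _ member_inj); apply: subset_leq_card.
apply/subsetP => _ /imsetP[i _ ->]; rewrite inE; apply/eqP/val_inj.
rewrite /= inordK ?ltnS ?geq_minr // divnMDl // divn_small // addn0.
by apply/minn_idPl; rewrite -ltnS.
Qed.

Lemma ramsey_prop_star (t l n p T : nat) :
  0 < l -> T.+1 * l <= t -> T.+1 * n <= p * T -> 0 < p ->
  ramsey_prop (t - l) t (@star_rel n) p.
Proof.
move=> l_gt0 Tl Tn p_gt0 c csym; pose v : 'I_p := Ordinal p_gt0.
pose block u := colour_block l T (c v u).
have [|k leaves] := @pigeonhole_fiber_compl _ _ [set~ v] block n.
  by rewrite cardsC1 !card_ord prednK //; nia.
have [|f [f_inj f_cols]] :=
  @star_copy_colors_sub p t n c v [set col : 'I_t | colour_block l T col != k] csym.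
  by apply: leq_trans leaves _; apply: subset_leq_card; apply/subsetP => u;
     rewrite !inE.
exists f; split=> //; apply: leq_trans (subset_leq_card f_cols) _.
rewrite (_ : [set col | _ != k] = ~: [set col : 'I_t | colour_block l T col == k]);
  last by apply/setP => col; rewrite !inE.
by rewrite cardsCs setCK card_ord leq_sub2l // colour_block_card.
Qed.

Lemma ratio_lt_nat (R : realFieldType) (T n p : nat) : 0 < T ->
  (((T.+1 * n)%:R - 1) / (T.+1%:R - 1) < (p%:R : R))%R -> T.+1 * n <= p * T.
Proof.
move=> T_gt0; have -> : (T.+1%:R - 1 = T%:R :> R)%R by rewrite -addn1 natrD addrK.
rewrite ltr_pdivrMr ?ltr0n //.
by rewrite -natrM ltrBlDr -(natrD _ _ 1) ltr_nat addn1 ltnS.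
Qed.

Theorem theorem1 (t l n p : nat) :
  0 < t -> 0 < l -> 0 < n -> 2 * l <= t ->
  (((t %/ l * n)%:R - 1) / ((t %/ l)%:R - 1) < (p%:R : rat))%R ->
  exists N, is_Rst (t - l) t (@star_rel n) N /\ N <= p.
Proof.
move=> _ l_gt0 n_gt0 two_l_le_t.
have : 2 <= t %/ l by rewrite leq_divRL.
have : t %/ l * l <= t := leq_divM t l.
case: (t %/ l) => [|[|T]] // Tl _ /(ratio_lt_nat (ltn0Sn _)) Tn.
have p_gt0 : 0 < p by case: p Tn => //; nia.
exact: Rst_exists_le p_gt0 (ramsey_prop_star l_gt0 Tl Tn p_gt0).
Qed.
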